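(* Let $(q_n)$ be the Fibonacci Quilt sequence. There is a constant $\rho\in(0,1)$, $\rho\approx0.92627$, such that the proportion of integers $m\in[1,q_n)$ for which the greedy decomposition of $m$ is an FQ-legal decomposition converges to $\rho$ as $n\to\infty$.
   Context: Given an increasing sequence of positive integers $(q_i)_{i\ge1}$, an FQ-legal decomposition of an integer $m\ge0$ is an expression $m=q_{\ell_1}+q_{\ell_2}+\cdots+q_{\ell_t}$ ($t\ge0$, the empty sum representing $0$) with distinct indices $\ell_1>\ell_2>\cdots>\ell_t$ such that $|\ell_i-\ell_j|\notin\{1,3,4\}$ for all $i,j$, and $\{1,3\}\not\subset\{\ell_1,\dots,\ell_t\}$. The Fibonacci Quilt sequence is the increasing sequence of positive integers $(q_i)_{i\ge1}$ in which each $q_i$ is the smallest positive integer having no FQ-legal decomposition using only $q_1,\dots,q_{i-1}$. Its first terms are $1,2,3,4,5,7,9,12,16,21,28,37,49,\dots$. The greedy decomposition of a positive integer $m$ is obtained by choosing the largest $q_k\le m$ as a summand and, if $m-q_k>0$, recursively appending the greedy decomposition of $m-q_k$; the greedy algorithm succeeds on $m$ if the resulting decomposition is FQ-legal. *)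

From Stdlib Require Import Reals Arith List Bool.
Import ListNotations.

Fixpoint strictly_decreasing (l : list nat) : bool :=
  match l with
  | [] => true
  | x :: r =>
      match r with
      | [] => true
      | y :: _ => (y <? x) && strictly_decreasing r
      end
  end.

Definition gap_ok (i j : nat) : bool :=
  let d := (i - j) + (j - i) in
  negb ((d =? 1) || (d =? 3) || (d =? 4)).

Definition FQ_legal (l : list nat) : bool :=
  strictly_decreasing l
  && forallb (fun i => 1 <=? i) l
  && forallb (fun i => forallb (fun j => gap_ok i j) l) l
  && negb (existsb (Nat.eqb 1) l && existsb (Nat.eqb 3) l).

Fixpoint subsets (l : list nat) : list (list nat) :=
  match l with
  | [] => [[]]
  | x :: r => let s := subsets r in map (cons x) s ++ s
  end.

(* qs = [q_1; ...; q_k]; value of a decomposition with index list S *)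
Definition dec_value (qs : list nat) (S : list nat) : nat :=
  list_sum (map (fun i => nth (i - 1) qs 0) S).

Definition has_legal_dec (qs : list nat) (m : nat) : bool :=
  existsb (fun S => FQ_legal S && (dec_value qs S =? m))
          (subsets (rev (seq 1 (length qs)))).

(* smallest positive integer with no FQ-legal decomposition using qs;
   such an integer always exists in [1, sum qs + 1] since every decomposition
   has value at most sum qs. *)
Definition next_term (qs : list nat) : nat :=
  match find (fun m => negb (has_legal_dec qs m)) (seq 1 (S (list_sum qs))) with
  | Some m => m
  | None => 0
  end.

Fixpoint fq_list (n : nat) : list nat :=
  match n with
  | 0 => []
  | S k => let qs := fq_list k in qs ++ [next_term qs]
  end.

(* q i = q_i for i >= 1 (q 0 = 0 is junk, never used) *)
Definition q (i : nat) : nat := nth (i - 1) (fq_list i) 0.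

(* index k of the largest q_k <= m (for m >= 1; since q_k >= k, k <= m) *)
Definition largest_index (m : nat) : nat :=
  last (filter (fun k => q k <=? m) (seq 1 m)) 0.

(* greedy decomposition as list of indices; the fuel m suffices since each
   step decreases m by at least 1 *)
Fixpoint greedy_aux (fuel m : nat) : list nat :=
  match fuel with
  | 0 => []
  | S f =>
      if m =? 0 then []
      else let k := largest_index m in k :: greedy_aux f (m - q k)
  end.

Definition greedy (m : nat) : list nat := greedy_aux m m.

Definition greedy_succeeds (m : nat) : bool := FQ_legal (greedy m).

Definition greedy_count (n : nat) : nat :=
  length (filter greedy_succeeds (seq 1 (q n - 1))).

Definition greedy_proportion (n : nat) : R :=
  (INR (greedy_count n) / INR (q n - 1))%R.

From Stdlib Require Import Reals Lia List Bool Wf_nat ZArith Lra.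
Import ListNotations.

(* The Fibonacci Quilt sequence obeys q_n = q_(n-2) + q_(n-3): every m < q_(n+1) is a legal
   sum of q_1, ..., q_n, and q_(n+1) is not. For k >= 6, [q_k, q_(k+1)) = q_k + [0, q_(k-4)),
   and on it the greedy algorithm takes q_k and continues on a remainder whose indices are at
   most k - 5, so it succeeds exactly when it succeeds on the remainder. Hence the number c_n
   of successes below q_n satisfies c_(k+1) = c_k + c_(k-4), like q itself. Solving this
   recurrence expresses q_n - c_n as (6 q_n - 5 q_(n-1) - 3 q_(n-2)) / 7 up to a bounded
   periodic term, and q_(n-1) = q_n / p + O(1) for the plastic number p (p^3 = p + 1), so
   c_n / q_n tends to (1 + 5/p + 3/p^2) / 7. *)

(** * The recursion for q *)

(* Shown equal to [q] in [q_fq]. *)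
Fixpoint fq (n : nat) : nat :=
  match n with
  | S (S ((S ((S (S _)) as n3)) as n2)) => fq n2 + fq n3
  | _ => n
  end.

Lemma fq_rec n : 5 <= n -> fq n = fq (n - 2) + fq (n - 3).
Proof.
  intros Hn. destruct n as [|[|[|[|[|m]]]]]; try lia.
  cbn [fq]. f_equal; f_equal; lia.
Qed.

Lemma fq_lt_succ n : fq n < fq (S n).
Proof.
  induction n as [n IH] using lt_wf_ind.
  destruct (le_lt_dec n 4) as [H|H].
  - destruct n as [|[|[|[|[|m]]]]]; simpl; lia.
  - rewrite (fq_rec (S n)), (fq_rec n) by lia.
    pose proof (IH (n - 2) ltac:(lia)). pose proof (IH (n - 3) ltac:(lia)).
    replace (S (n - 2)) with (n - 1) in * by lia.
    replace (S (n - 3)) with (n - 2) in * by lia.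
    replace (S n - 2) with (n - 1) by lia. replace (S n - 3) with (n - 2) by lia. lia.
Qed.

Lemma fq_lt a b : a < b -> fq a < fq b.
Proof.
  induction 1; pose proof (fq_lt_succ a); [lia|].
  pose proof (fq_lt_succ m). lia.
Qed.

Lemma fq_le a b : a <= b -> fq a <= fq b.
Proof.
  intros H. destruct (Nat.eq_dec a b) as [->|]; [lia|].
  pose proof (fq_lt a b). lia.
Qed.

Lemma fq_ge_id n : n <= fq n.
Proof. induction n; [simpl; lia|]. pose proof (fq_lt_succ n). lia. Qed.

Lemma fq_pos n : 1 <= n -> 1 <= fq n.
Proof. intros. pose proof (fq_ge_id n). lia. Qed.

Lemma fq_padovan m : 2 <= m -> fq (m + 3) = fq (m + 1) + fq m.
Proof. intros. rewrite fq_rec by lia. f_equal; f_equal; lia. Qed.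

Lemma fq_padovan_le m : fq (m + 1) + fq m <= fq (m + 3).
Proof.
  destruct (le_lt_dec 2 m); [rewrite fq_padovan; lia|].
  destruct m as [|[|]]; simpl; lia.
Qed.

Lemma fq_succ n : 6 <= n -> fq (S n) = fq n + fq (n - 4).
Proof.
  intros H. rewrite (fq_rec (S n)), (fq_rec n), (fq_rec (S n - 2)) by lia.
  replace (S n - 2 - 2) with (n - 3) by lia.
  replace (S n - 2 - 3) with (n - 4) by lia.
  replace (S n - 3) with (n - 2) by lia. lia.
Qed.

Lemma fq_succ_le_double n : 1 <= n -> fq (S n) <= 2 * fq n.
Proof.
  intros H. destruct (le_lt_dec n 4).
  - destruct n as [|[|[|[|[|m]]]]]; simpl; lia.
  - rewrite (fq_rec (S n)) by lia.
    pose proof (fq_le (S n - 2) n). pose proof (fq_le (S n - 3) n). lia.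
Qed.

(** * Legal decompositions *)

Definition admissible_gap (i j : nat) : Prop :=
  let d := i - j + (j - i) in d <> 1 /\ d <> 3 /\ d <> 4.

Lemma gap_ok_iff i j : gap_ok i j = true <-> admissible_gap i j.
Proof.
  unfold gap_ok, admissible_gap.
  destruct (Nat.eqb_spec (i - j + (j - i)) 1), (Nat.eqb_spec (i - j + (j - i)) 3),
    (Nat.eqb_spec (i - j + (j - i)) 4); simpl; intuition (try lia; discriminate).
Qed.

Lemma admissible_gap_sym i j : admissible_gap i j -> admissible_gap j i.
Proof. unfold admissible_gap; lia. Qed.

Lemma strictly_decreasing_cons x r : strictly_decreasing (x :: r) = true <->
  (forall y, In y r -> y < x) /\ strictly_decreasing r = true.
Proof.
  revert x; induction r as [|a r IH]; intros x.
  - simpl. intuition.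
  - change (strictly_decreasing (x :: a :: r))
      with ((a <? x) && strictly_decreasing (a :: r)).
    rewrite andb_true_iff, Nat.ltb_lt, (IH a). split.
    + intros [Hax [Hr Hs]]. split; [|split; auto].
      intros y [<-|Hy]; [auto|]. specialize (Hr y Hy). lia.
    + intros [Hy [Hr Hs]]. split; [apply Hy; left; auto|auto].
Qed.

Lemma existsb_eqb_In k l : existsb (Nat.eqb k) l = true <-> In k l.
Proof.
  rewrite existsb_exists. split.
  - intros [x [Hx E]]. apply Nat.eqb_eq in E. subst; auto.
  - intros H. exists k. split; auto. apply Nat.eqb_refl.
Qed.

Lemma FQ_legal_iff l : FQ_legal l = true <->
  strictly_decreasing l = true /\ (forall x, In x l -> 1 <= x) /\
  (forall x y, In x l -> In y l -> admissible_gap x y) /\ ~ (In 1 l /\ In 3 l).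
Proof.
  unfold FQ_legal.
  rewrite !andb_true_iff, negb_true_iff, !forallb_forall, <- !existsb_eqb_In.
  assert (Hpos : (forall x, In x l -> (1 <=? x) = true) <-> (forall x, In x l -> 1 <= x)).
  { split; intros H x Hx; apply Nat.leb_le; auto. }
  assert (Hgap : (forall x, In x l -> forallb (fun j => gap_ok x j) l = true) <->
                 (forall x y, In x l -> In y l -> admissible_gap x y)).
  { split; intros H x.
    - intros y Hx Hy. apply gap_ok_iff. specialize (H x Hx).
      rewrite forallb_forall in H. auto.
    - intros Hx. apply forallb_forall. intros y Hy. apply gap_ok_iff; auto. }
  rewrite Hpos, Hgap.
  destruct (existsb (Nat.eqb 1) l), (existsb (Nat.eqb 3) l); simpl;
    intuition discriminate.
Qed.

Lemma FQ_legal_cons j r : FQ_legal (j :: r) = true <->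
  FQ_legal r = true /\ (forall y, In y r -> y < j /\ admissible_gap j y) /\
  1 <= j /\ ~ (j = 1 /\ In 3 r) /\ ~ (j = 3 /\ In 1 r).
Proof.
  rewrite !FQ_legal_iff, strictly_decreasing_cons. simpl. split.
  - intros [[Hlt Hsd] [H1 [Hg Hn]]].
    split; [split; [|split; [|split]]|split; [|split; [|split]]]; auto.
    + intros [A B]. auto.
    + intros [-> B]. auto.
    + intros [-> B]. auto.
  - intros [[Hsd [H1 [Hg Hn]]] [Hy [Hj [N1 N3]]]].
    split; [split|split; [|split]].
    + intros y H. apply Hy; auto.
    + auto.
    + intros x [<-|Hx]; auto.
    + intros x y [<-|Hx] [<-|Hy'].
      * unfold admissible_gap; lia.
      * apply Hy; auto.
      * apply admissible_gap_sym, Hy; auto.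
      * apply Hg; auto.
    + intros [[E1|A] [E3|B]]; subst; try lia; auto.
Qed.

Lemma FQ_legal_tail j r : FQ_legal (j :: r) = true -> FQ_legal r = true.
Proof. rewrite FQ_legal_cons. tauto. Qed.

Lemma FQ_legal_cons_far n r : 6 <= n -> FQ_legal r = true ->
  (forall y, In y r -> y + 5 <= n) -> FQ_legal (n :: r) = true.
Proof.
  intros Hn Hr Hy. apply FQ_legal_cons.
  split; [auto|split; [|split; [lia|split; lia]]].
  intros y H. specialize (Hy y H). unfold admissible_gap. lia.
Qed.

Lemma FQ_legal_pos S x : FQ_legal S = true -> In x S -> 1 <= x.
Proof. rewrite FQ_legal_iff. intros (_ & H & _). auto. Qed.

Definition fq_sum (S : list nat) : nat := list_sum (map fq S).

Lemma fq_sum_cons j r : fq_sum (j :: r) = fq j + fq_sum r.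
Proof. reflexivity. Qed.

Lemma fq_sum_legal_lt j r : FQ_legal (j :: r) = true -> fq_sum (j :: r) < fq (j + 3).
Proof.
  revert j; induction r as [|h r IH]; intros j HL.
  - unfold fq_sum; simpl. pose proof (fq_lt j (j + 3)). lia.
  - pose proof HL as HL'. apply FQ_legal_cons in HL' as [Hr [Hy _]].
    destruct (Hy h (or_introl eq_refl)) as [Hhj Hg]. unfold admissible_gap in Hg.
    specialize (IH h Hr). rewrite fq_sum_cons.
    pose proof (fq_le (h + 3) (j + 1)). pose proof (fq_padovan_le j). lia.
Qed.

Lemma fq_sum_legal_bound S n : FQ_legal S = true -> (forall x, In x S -> x <= n) ->
  fq_sum S < fq (n + 3).
Proof.
  destruct S as [|j r]; intros HL Hb.
  - pose proof (fq_pos (n + 3)). unfold fq_sum; simpl. lia.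
  - pose proof (fq_sum_legal_lt j r HL). pose proof (Hb j (or_introl eq_refl)).
    pose proof (fq_le (j + 3) (n + 3)). lia.
Qed.

Lemma legal_sum_exists n m : m < fq (S n) ->
  exists S, FQ_legal S = true /\ (forall x, In x S -> x <= n) /\ fq_sum S = m.
Proof.
  revert m; induction n as [n IH] using lt_wf_ind; intros m Hm.
  destruct (le_lt_dec n 5) as [Hn|Hn].
  - assert (Hm6 : m <= 6 /\ (m <= 5 -> m <= n) /\ (m = 6 -> n = 5))
      by (destruct n as [|[|[|[|[|[|]]]]]]; simpl in Hm; lia).
    destruct m as [|[|[|[|[|[|[|]]]]]]];
      [exists []|exists [1]|exists [2]|exists [3]|exists [4]|exists [5]|exists [4; 2]|lia];
      (split; [reflexivity|split; [simpl; intros; lia|reflexivity]]).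
  - destruct (le_lt_dec (fq n) m) as [Hge|Hlt].
    + rewrite fq_succ in Hm by lia.
      destruct (IH (n - 5) ltac:(lia) (m - fq n)) as [L [HL [Hb Hs]]].
      { replace (S (n - 5)) with (n - 4) by lia. lia. }
      exists (n :: L). split; [|split].
      * apply FQ_legal_cons_far; [lia|auto|]. intros y Hy. specialize (Hb y Hy). lia.
      * intros x [<-|Hx]; [lia|]. specialize (Hb x Hx). lia.
      * rewrite fq_sum_cons. lia.
    + destruct (IH (n - 1) ltac:(lia) m) as [L [HL [Hb Hs]]].
      { replace (S (n - 1)) with n by lia. auto. }
      exists L. split; [auto|split; [|auto]]. intros x Hx. specialize (Hb x Hx). lia.
Qed.

Definition no_legal_sum (n : nat) : Prop :=
  forall L, FQ_legal L = true -> (forall x, In x L -> x <= n) -> fq_sum L <> fq (S n).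

Lemma FQ_legal_after_pair h r : FQ_legal (h + 2 :: h :: r) = true ->
  forall y, In y r -> y + 5 <= h.
Proof.
  intros HL y Hy. apply FQ_legal_cons in HL as [Hr [Hj _]].
  apply FQ_legal_cons in Hr as [_ [Hh _]].
  destruct (Hh y Hy) as [Hyh Hg1]. destruct (Hj y (or_intror Hy)) as [_ Hg2].
  unfold admissible_gap in Hg1, Hg2. lia.
Qed.

(* In a legal sum the two largest indices j > h satisfy h = j - 2 or h <= j - 5; in both cases
   either the sum misses q_(n+1) by size, or the remainder would be a legal sum equal to an
   earlier term q_(k+1). *)
Section NoLegalSum.

Variable n : nat.
Hypothesis IH : forall k, k < n -> no_legal_sum k.

Lemma no_legal_sum_far j r : 6 <= j <= n -> FQ_legal r = true ->
  (forall y, In y r -> y + 5 <= j) -> fq j + fq_sum r <> fq (S n).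
Proof.
  intros Hj Hr Hb Hs.
  destruct (Nat.eq_dec j n) as [->|Hne].
  - rewrite fq_succ in Hs by lia.
    apply (IH (n - 5) ltac:(lia) r Hr); [intros y Hy; specialize (Hb y Hy); lia|].
    replace (S (n - 5)) with (n - 4) by lia. lia.
  - pose proof (fq_sum_legal_bound r (j - 5) Hr ltac:(intros y Hy; specialize (Hb y Hy); lia)).
    pose proof (fq_le (j + 2) (S n)). rewrite (fq_rec (j + 2)) in * by lia.
    pose proof (fq_lt (j - 5 + 3) (j + 2 - 3)). replace (j + 2 - 2) with j in * by lia. lia.
Qed.

Lemma no_legal_sum_pair h r : 2 <= h -> h + 2 <= n -> FQ_legal r = true ->
  (forall y, In y r -> y + 5 <= h) -> fq (h + 2) + fq h + fq_sum r <> fq (S n).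
Proof.
  intros Hh Hn Hr Hb Hs.
  pose proof (fq_sum_legal_bound r (h - 5) Hr ltac:(intros y Hy; specialize (Hb y Hy); lia))
    as Hrest.
  pose proof (fq_le (h - 5 + 3) (h + 1)).
  assert (Hcase : n = h + 2 \/ n = h + 3 \/ h + 4 <= n) by lia.
  destruct Hcase as [->|[->|Hn4]].
  - replace (S (h + 2)) with (h + 3) in Hs by lia.
    rewrite fq_padovan in Hs by lia. pose proof (fq_lt_succ (h + 1)).
    replace (S (h + 1)) with (h + 2) in * by lia. lia.
  - replace (S (h + 3)) with (h + 4) in Hs by lia.
    rewrite (fq_rec (h + 4)) in Hs by lia.
    replace (h + 4 - 2) with (h + 2) in Hs by lia. replace (h + 4 - 3) with (h + 1) in Hs by lia.
    destruct (le_lt_dec 6 h) as [H6|H6].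
    + pose proof (fq_succ h H6) as E. replace (S h) with (h + 1) in E by lia.
      apply (IH (h - 5) ltac:(lia) r Hr); [intros y Hy; specialize (Hb y Hy); lia|].
      replace (S (h - 5)) with (h - 4) by lia. lia.
    + destruct r as [|y r].
      { pose proof (fq_lt h (h + 1)). change (fq_sum []) with 0 in Hs. lia. }
      pose proof (Hb y (or_introl eq_refl)).
      pose proof (FQ_legal_pos _ y Hr (or_introl eq_refl)). lia.
  - pose proof (fq_le (h + 5) (S n)). rewrite (fq_rec (h + 5)) in * by lia.
    replace (h + 5 - 2) with (h + 3) in * by lia. replace (h + 5 - 3) with (h + 2) in * by lia.
    pose proof (fq_padovan_le h). lia.
Qed.

End NoLegalSum.

Lemma fq_no_legal_sum n : no_legal_sum n.
Proof.
  induction n as [n IH] using lt_wf_ind.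
  intros [|j r] HL Hb Hs.
  { pose proof (fq_pos (S n) ltac:(lia)). change (fq_sum []) with 0 in Hs. lia. }
  pose proof (Hb j (or_introl eq_refl)) as Hjn.
  rewrite fq_sum_cons in Hs.
  destruct r as [|h r].
  { change (fq_sum []) with 0 in Hs. pose proof (fq_lt j (S n) ltac:(lia)). lia. }
  pose proof HL as HL'. apply FQ_legal_cons in HL' as [Hr [Hy [_ [_ N3]]]].
  destruct (Hy h (or_introl eq_refl)) as [Hhj Hg]. unfold admissible_gap in Hg.
  pose proof (FQ_legal_pos _ h Hr (or_introl eq_refl)).
  destruct (Nat.eq_dec (h + 2) j) as [<-|Hfar].
  - rewrite fq_sum_cons in Hs.
    destruct (Nat.eq_dec h 1) as [->|Hh1]; [apply N3; simpl; auto|].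
    apply (no_legal_sum_pair n IH h r); auto; try lia.
    + apply (FQ_legal_tail _ _ Hr).
    + apply FQ_legal_after_pair with (1 := HL).
  - apply (no_legal_sum_far n IH j (h :: r)); auto; try lia.
    intros y [<-|Hyr]; [lia|]. apply FQ_legal_cons in Hr as [_ [Hr _]].
    specialize (Hr y Hyr). lia.
Qed.

Lemma In_subsets l S : In S (subsets l) -> forall x, In x S -> In x l.
Proof.
  revert S; induction l as [|a l IH]; intros S HS x Hx; simpl in HS.
  - destruct HS as [<-|[]]. destruct Hx.
  - apply in_app_or in HS as [HS|HS].
    + apply in_map_iff in HS as [S' [<- HS']].
      destruct Hx as [<-|Hx]; [left; auto|right; eapply IH; eauto].
    + right; eapply IH; eauto.
Qed.

Lemma subsets_rev_seq_complete k S : strictly_decreasing S = true ->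
  (forall x, In x S -> 1 <= x <= k) -> In S (subsets (rev (seq 1 k))).
Proof.
  revert S; induction k as [|k IH]; intros S Hs Hb.
  - destruct S as [|x S]; [simpl; auto|]. specialize (Hb x (or_introl eq_refl)). lia.
  - rewrite seq_S, rev_app_distr. simpl. apply in_or_app.
    destruct S as [|x S']; [right; apply IH; auto; intros x []|].
    apply strictly_decreasing_cons in Hs as [Hlt Hs'].
    pose proof (Hb x (or_introl eq_refl)).
    destruct (Nat.eq_dec x (S k)) as [->|Hne].
    + left. apply in_map, IH; auto. intros y Hy.
      specialize (Hlt y Hy). specialize (Hb y (or_intror Hy)). lia.
    + right. apply IH; [apply strictly_decreasing_cons; auto|].
      intros y [<-|Hy]; [lia|]. pose proof (Hlt y Hy). pose proof (Hb y (or_intror Hy)). lia.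
Qed.

Lemma nth_map_fq_seq k i : 1 <= i <= k -> nth (i - 1) (map fq (seq 1 k)) 0 = fq i.
Proof.
  intros H. transitivity (nth (i - 1) (map fq (seq 1 k)) (fq 0)); [reflexivity|].
  rewrite map_nth, seq_nth by lia. f_equal; lia.
Qed.

Lemma dec_value_map_fq k S : (forall x, In x S -> 1 <= x <= k) ->
  dec_value (map fq (seq 1 k)) S = fq_sum S.
Proof.
  induction S as [|a S IH]; intros Hb; [reflexivity|].
  unfold dec_value in *. simpl. rewrite nth_map_fq_seq by (apply Hb; left; auto).
  rewrite IH; [reflexivity|]. intros x Hx; apply Hb; right; auto.
Qed.

Lemma has_legal_dec_iff k m : has_legal_dec (map fq (seq 1 k)) m = true <->
  exists S, FQ_legal S = true /\ (forall x, In x S -> x <= k) /\ fq_sum S = m.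
Proof.
  unfold has_legal_dec. rewrite length_map, length_seq, existsb_exists. split.
  - intros [S [HS E]]. apply andb_true_iff in E as [HL E]. apply Nat.eqb_eq in E.
    assert (Hb : forall x, In x S -> 1 <= x <= k).
    { intros x Hx. pose proof (In_subsets _ _ HS x Hx) as H.
      apply in_rev, in_seq in H. lia. }
    exists S. split; [auto|split; [intros x Hx; apply Hb; auto|]].
    rewrite <- E. symmetry. apply dec_value_map_fq; auto.
  - intros [S [HL [Hb Hs]]].
    assert (Hb' : forall x, In x S -> 1 <= x <= k)
      by (intros x Hx; split; [eapply FQ_legal_pos; eauto|auto]).
    exists S. split.
    + apply subsets_rev_seq_complete; auto. apply FQ_legal_iff in HL. tauto.
    + apply andb_true_iff. split; auto. apply Nat.eqb_eq. rewrite dec_value_map_fq; auto.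
Qed.

Lemma find_seq_first (f : nat -> bool) len a t :
  (forall m, a <= m < t -> f m = false) -> f t = true -> a <= t < a + len ->
  find f (seq a len) = Some t.
Proof.
  revert a; induction len as [|len IH]; intros a Hf Ht Hr; [lia|].
  simpl. destruct (Nat.eq_dec a t) as [->|Hne]; [rewrite Ht; reflexivity|].
  rewrite Hf by lia. apply IH; [intros m Hm; apply Hf|..]; auto; lia.
Qed.

Lemma fq_le_sum_succ k : fq (S k) <= S (list_sum (map fq (seq 1 k))).
Proof.
  induction k as [|k IH]; [simpl; lia|].
  rewrite seq_S, map_app, list_sum_app. cbn [map list_sum fold_right].
  pose proof (fq_succ_le_double (S k) ltac:(lia)). replace (1 + k) with (S k) by lia. lia.
Qed.

Lemma next_term_map_fq k : next_term (map fq (seq 1 k)) = fq (S k).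
Proof.
  unfold next_term. rewrite (find_seq_first _ _ 1 (fq (S k))); [reflexivity|..].
  - intros m Hm. apply negb_false_iff, has_legal_dec_iff, legal_sum_exists. lia.
  - apply negb_true_iff, not_true_iff_false. intros E.
    apply has_legal_dec_iff in E as [S [HL [Hb Hs]]]. exact (fq_no_legal_sum k S HL Hb Hs).
  - pose proof (fq_le_sum_succ k). pose proof (fq_pos (S k) ltac:(lia)). lia.
Qed.

Lemma fq_list_eq n : fq_list n = map fq (seq 1 n).
Proof.
  induction n as [|n IH]; [reflexivity|].
  simpl fq_list. rewrite IH, next_term_map_fq, seq_S, map_app. reflexivity.
Qed.

Lemma q_fq i : q i = fq i.
Proof.
  destruct i as [|i]; [reflexivity|].
  unfold q. rewrite fq_list_eq, nth_map_fq_seq by lia. reflexivity.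
Qed.

(** * The greedy algorithm *)

Lemma last_filter_fq_le_seq m t : 1 <= m -> 1 <= t ->
  let k := last (filter (fun k => fq k <=? m) (seq 1 t)) 0 in
  1 <= k <= t /\ fq k <= m /\ (k = t \/ m < fq (S k)).
Proof.
  intros Hm Ht. induction t as [|t IH]; [lia|].
  destruct t as [|t]; [destruct m; simpl; lia|].
  cbv zeta in *. specialize (IH ltac:(lia)).
  rewrite seq_S, filter_app. replace (1 + S t) with (S (S t)) by lia.
  change (filter (fun k => fq k <=? m) [S (S t)])
    with (if fq (S (S t)) <=? m then [S (S t)] else []).
  destruct (fq (S (S t)) <=? m) eqn:E.
  - rewrite last_last. apply Nat.leb_le in E. lia.
  - rewrite app_nil_r. apply Nat.leb_gt in E.
    destruct IH as [A [B [C|C]]]; repeat split; try lia; right; rewrite C; auto.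
Qed.

Lemma largest_index_spec m : 1 <= m ->
  1 <= largest_index m /\ fq (largest_index m) <= m < fq (S (largest_index m)).
Proof.
  intros Hm. unfold largest_index.
  rewrite (filter_ext _ (fun k => fq k <=? m)) by (intros; rewrite q_fq; reflexivity).
  destruct (last_filter_fq_le_seq m m Hm Hm) as [A [B C]].
  set (k := last _ _) in *.
  destruct C as [->|C]; [pose proof (fq_ge_id (S m))|]; lia.
Qed.

Lemma largest_index_unique m k : 1 <= k -> fq k <= m < fq (S k) -> largest_index m = k.
Proof.
  intros Hk1 Hk. assert (Hm : 1 <= m) by (pose proof (fq_pos k Hk1); lia).
  destruct (largest_index_spec m Hm) as [A B].
  destruct (lt_eq_lt_dec (largest_index m) k) as [[H|H]|H]; auto.
  - pose proof (fq_le (S (largest_index m)) k). lia.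
  - pose proof (fq_le (S k) (largest_index m)). lia.
Qed.

Lemma greedy_aux_fuel f1 f2 m : m <= f1 -> m <= f2 -> greedy_aux f1 m = greedy_aux f2 m.
Proof.
  revert f2 m; induction f1 as [|f1 IH]; intros f2 m H1 H2.
  - replace m with 0 by lia. destruct f2; reflexivity.
  - destruct f2 as [|f2]; [replace m with 0 by lia; reflexivity|].
    simpl. destruct (Nat.eqb_spec m 0); [reflexivity|].
    destruct (largest_index_spec m ltac:(lia)) as [A B].
    pose proof (fq_pos _ A). rewrite q_fq. f_equal. apply IH; lia.
Qed.

Lemma greedy_cons m : 1 <= m ->
  greedy m = largest_index m :: greedy (m - fq (largest_index m)).
Proof.
  intros Hm. unfold greedy. destruct m as [|m]; [lia|].
  simpl greedy_aux at 1.
  destruct (largest_index_spec (S m) Hm) as [A B]. pose proof (fq_pos _ A).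
  rewrite q_fq. f_equal. apply greedy_aux_fuel; lia.
Qed.

Lemma In_greedy_aux f m x : In x (greedy_aux f m) -> 1 <= x /\ fq x <= m.
Proof.
  revert m; induction f as [|f IH]; intros m H; [destruct H|].
  simpl in H. destruct (Nat.eqb_spec m 0); [destruct H|].
  destruct (largest_index_spec m ltac:(lia)) as [A B].
  destruct H as [<-|H]; [lia|]. apply IH in H. rewrite q_fq in H. lia.
Qed.

Lemma greedy_succeeds_shift k m : 6 <= k -> fq k <= m < fq (S k) ->
  greedy_succeeds m = greedy_succeeds (m - fq k).
Proof.
  intros Hk Hm. unfold greedy_succeeds.
  pose proof (fq_pos k ltac:(lia)).
  rewrite greedy_cons, (largest_index_unique m k) by lia.
  rewrite fq_succ in Hm by lia.
  assert (Hb : forall y, In y (greedy (m - fq k)) -> y + 5 <= k).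
  { intros y Hy. apply In_greedy_aux in Hy as [A B].
    destruct (le_lt_dec (y + 5) k); [lia|]. pose proof (fq_le (k - 4) y). lia. }
  destruct (FQ_legal (greedy (m - fq k))) eqn:E.
  - apply FQ_legal_cons_far; auto.
  - destruct (FQ_legal (k :: greedy (m - fq k))) eqn:E2; auto.
    apply FQ_legal_tail in E2. congruence.
Qed.

(** * Counting successes *)

Lemma seq_eq_map_add a b : seq a b = map (Nat.add a) (seq 0 b).
Proof.
  revert a; induction b as [|b IH]; intros a; [reflexivity|].
  rewrite !seq_S, map_app, IH. reflexivity.
Qed.

Lemma length_filter_seq_add (f : nat -> bool) a b :
  length (filter f (seq 0 (a + b))) =
  length (filter f (seq 0 a)) + length (filter (fun r => f (a + r)) (seq 0 b)).
Proof.
  rewrite seq_app, filter_app, length_app. f_equal.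
  rewrite (seq_eq_map_add (0 + a)), filter_map_swap, length_map. reflexivity.
Qed.

Definition success_count (N : nat) : nat := length (filter greedy_succeeds (seq 0 N)).

Lemma success_count_fq_succ k : 6 <= k ->
  success_count (fq (S k)) = success_count (fq k) + success_count (fq (k - 4)).
Proof.
  intros Hk. unfold success_count. rewrite (fq_succ k Hk) at 1.
  rewrite length_filter_seq_add. f_equal. f_equal. apply filter_ext_in.
  intros r Hr. apply in_seq in Hr.
  rewrite (greedy_succeeds_shift k (fq k + r) Hk); [f_equal; lia|].
  rewrite fq_succ by lia. lia.
Qed.

(* [success_count] also counts m = 0. *)
Lemma greedy_count_succ n : 1 <= n -> S (greedy_count n) = success_count (fq n).
Proof.
  intros Hn. unfold greedy_count, success_count. rewrite q_fq.
  pose proof (fq_pos n Hn). destruct (fq n) as [|N]; [lia|].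
  replace (S N - 1) with N by lia. reflexivity.
Qed.

(* [q] is computed by exhaustive search; small cases are evaluated through this copy of the
   greedy algorithm, which uses [fq] instead. *)
Definition largest_index_fq (m : nat) : nat :=
  last (filter (fun k => fq k <=? m) (seq 1 m)) 0.

Fixpoint greedy_fq_aux (fuel m : nat) : list nat :=
  match fuel with
  | 0 => []
  | S f => if m =? 0 then []
           else let k := largest_index_fq m in k :: greedy_fq_aux f (m - fq k)
  end.

Lemma greedy_aux_fq f m : greedy_aux f m = greedy_fq_aux f m.
Proof.
  revert m; induction f as [|f IH]; intros m; [reflexivity|].
  simpl. unfold largest_index.
  rewrite (filter_ext _ (fun k => fq k <=? m)) by (intros; rewrite q_fq; reflexivity).
  rewrite q_fq, IH. reflexivity.
Qed.

Lemma success_count_compute N :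
  success_count N = length (filter (fun m => FQ_legal (greedy_fq_aux m m)) (seq 0 N)).
Proof.
  unfold success_count. f_equal. apply filter_ext. intros m.
  unfold greedy_succeeds, greedy. rewrite greedy_aux_fq. reflexivity.
Qed.

Open Scope Z_scope.

Fixpoint oscillation (n : nat) : Z :=
  match n with
  | S (S (S (S (S (S m))))) => oscillation m
  | 0%nat => 2 | 1%nat => 3 | 2%nat => 1 | 3%nat => -2 | 4%nat => -3 | _ => -1
  end.

Lemma oscillation_add6 n : oscillation (n + 6) = oscillation n.
Proof. replace (n + 6)%nat with (S (S (S (S (S (S n)))))) by lia. reflexivity. Qed.

Lemma oscillation_rec t : oscillation (t + 5) = oscillation (t + 4) + oscillation t.
Proof.
  induction t as [t IH] using lt_wf_ind.
  destruct (le_lt_dec 6 t) as [H|H].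
  - replace t with (t - 6 + 6)%nat by lia.
    replace (t - 6 + 6 + 5)%nat with (t - 6 + 5 + 6)%nat by lia.
    replace (t - 6 + 6 + 4)%nat with (t - 6 + 4 + 6)%nat by lia.
    rewrite !oscillation_add6. apply IH. lia.
  - destruct t as [|[|[|[|[|[|]]]]]]; reflexivity || lia.
Qed.

Lemma oscillation_bound n : -3 <= oscillation n <= 3.
Proof.
  induction n as [n IH] using lt_wf_ind.
  destruct (le_lt_dec 6 n) as [H|H].
  - replace n with (n - 6 + 6)%nat by lia. rewrite oscillation_add6. apply IH. lia.
  - destruct n as [|[|[|[|[|[|]]]]]]; simpl; lia.
Qed.

Definition defect (n : nat) : Z := Z.of_nat (fq n) - Z.of_nat (success_count (fq n)).

Lemma defect_succ k : (6 <= k)%nat -> defect (S k) = defect k + defect (k - 4).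
Proof. intros Hk. unfold defect. rewrite success_count_fq_succ, fq_succ by auto. lia. Qed.

(* defect and fq both satisfy u(k+1) = u(k) + u(k-4), whose characteristic polynomial is
   x^5 - x^4 - 1 = (x^2 - x + 1)(x^3 - x - 1); the remainder below solves the first factor,
   hence is 6-periodic. *)
Lemma defect_identity n : (5 <= n)%nat ->
  7 * defect n = 6 * Z.of_nat (fq n) - 5 * Z.of_nat (fq (n - 1)) - 3 * Z.of_nat (fq (n - 2))
                 + oscillation n.
Proof.
  induction n as [n IH] using lt_wf_ind. intros Hn.
  destruct (le_lt_dec n 10) as [Hs|Hs].
  - unfold defect. rewrite success_count_compute.
    assert (n = 5 \/ n = 6 \/ n = 7 \/ n = 8 \/ n = 9 \/ n = 10)%nat as Hc by lia.
    destruct Hc as [->|[->|[->|[->|[->| ->]]]]]; vm_compute; reflexivity.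
  - destruct n as [|k]; [lia|].
    rewrite defect_succ by lia.
    pose proof (IH k ltac:(lia) ltac:(lia)) as Ik.
    pose proof (IH (k - 4)%nat ltac:(lia) ltac:(lia)) as Ik4.
    pose proof (fq_succ k ltac:(lia)) as E1.
    pose proof (fq_succ (k - 1) ltac:(lia)) as E2.
    pose proof (fq_succ (k - 2) ltac:(lia)) as E3.
    pose proof (oscillation_rec (k - 4)) as Ho.
    replace (S (k - 1)) with k in E2 by lia.
    replace (S (k - 2)) with (k - 1)%nat in E3 by lia.
    replace (k - 4 + 5)%nat with (S k) in Ho by lia.
    replace (k - 4 + 4)%nat with k in Ho by lia.
    replace (k - 4 - 1)%nat with (k - 1 - 4)%nat in Ik4 by lia.
    replace (k - 4 - 2)%nat with (k - 2 - 4)%nat in Ik4 by lia.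
    replace (S k - 1)%nat with k by lia. replace (S k - 2)%nat with (k - 1)%nat by lia.
    rewrite E1, E2, E3. lia.
Qed.

Close Scope Z_scope.
Open Scope R_scope.

(** * Asymptotics *)

Lemma plastic_number_exists : exists p, 1.324717 <= p <= 1.324718 /\ p * p * p = p + 1.
Proof.
  assert (Hc : continuity (fun x => x * x * x - x - 1)) by reg.
  destruct (IVT _ 1.324717 1.324718 Hc) as [p [Hp Ep]]; try lra.
  exists p. split; [auto|lra].
Qed.

Lemma defect_identity_R n : (5 <= n)%nat ->
  7 * (INR (fq n) - INR (success_count (fq n))) =
  6 * INR (fq n) - 5 * INR (fq (n - 1)) - 3 * INR (fq (n - 2)) + IZR (oscillation n).
Proof.
  intros Hn. pose proof (f_equal IZR (defect_identity n Hn)) as H. unfold defect in H.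
  rewrite !plus_IZR, !minus_IZR, !mult_IZR, !minus_IZR in H.
  rewrite !INR_IZR_INZ. exact H.
Qed.

Section PlasticNumber.

Variable p : R.
Hypothesis p_bounds : 1.324717 <= p <= 1.324718.
Hypothesis p_cubic : p * p * p = p + 1.

Definition fq_error (n : nat) : R := INR (fq n) - p * INR (fq (n - 1)).

Lemma fq_error_rec n : (3 <= n)%nat ->
  fq_error (n + 2) = - p * fq_error (n + 1) - (p * p - 1) * fq_error n.
Proof.
  intros Hn. unfold fq_error.
  replace (n + 2 - 1)%nat with (n + 1)%nat by lia.
  replace (n + 1 - 1)%nat with n by lia.
  rewrite (fq_rec (n + 2)), plus_INR by lia.
  replace (n + 2 - 2)%nat with n by lia. replace (n + 2 - 3)%nat with (n - 1)%nat by lia.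
  assert (E : forall x, p * p * p * x = (p + 1) * x) by (intros; rewrite p_cubic; ring).
  pose proof (E (INR (fq (n - 1)))). ring_simplify. lra.
Qed.

(* An invariant quadratic form of [fq_error_rec]: it contracts by the factor p^2 - 1 < 1,
   which keeps fq_error bounded. *)
Definition fq_energy (n : nat) : R :=
  fq_error (n + 1) * fq_error (n + 1) + p * fq_error (n + 1) * fq_error n
  + (p * p - 1) * fq_error n * fq_error n.

Lemma fq_energy_succ n : (3 <= n)%nat -> fq_energy (n + 1) = (p * p - 1) * fq_energy n.
Proof.
  intros Hn. unfold fq_energy. replace (n + 1 + 1)%nat with (n + 2)%nat by lia.
  rewrite fq_error_rec by lia. ring.
Qed.

Lemma fq_energy_ge n : (3 * p * p / 4 - 1) * fq_error n * fq_error n <= fq_energy n.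
Proof.
  unfold fq_energy.
  set (a := fq_error (n + 1)). set (b := fq_error n).
  assert (0 <= (a + p * b / 2) * (a + p * b / 2)) by apply Rle_0_sqr.
  assert (a * a + p * a * b + (p * p - 1) * b * b - (3 * p * p / 4 - 1) * b * b
          = (a + p * b / 2) * (a + p * b / 2)) by field.
  lra.
Qed.

Lemma fq_energy_nonneg n : 0 <= fq_energy n.
Proof.
  pose proof (fq_energy_ge n). pose proof (Rle_0_sqr (fq_error n)). unfold Rsqr in *. nra.
Qed.

Lemma fq_energy_le n : (3 <= n)%nat -> fq_energy n <= 0.2.
Proof.
  induction n as [|n IH]; intros Hn; [lia|].
  destruct (Nat.eq_dec n 2) as [->|Hne].
  - unfold fq_energy, fq_error. simpl. nra.
  - replace (S n) with (n + 1)%nat by lia. rewrite fq_energy_succ by lia.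
    specialize (IH ltac:(lia)). pose proof (fq_energy_nonneg n). nra.
Qed.

Lemma fq_error_bound n : (3 <= n)%nat -> -1 <= fq_error n <= 1.
Proof.
  intros Hn. pose proof (fq_energy_ge n). pose proof (fq_energy_le n Hn).
  assert (fq_error n * fq_error n <= 1) by nra. nra.
Qed.

Definition rho : R := (1 + 5 / p + 3 / (p * p)) / 7.

Lemma inv_p_bounds : 0.754877 <= / p <= 0.754878.
Proof.
  assert (p * / p = 1) by (field; lra).
  assert (0 < / p) by (apply Rinv_0_lt_compat; lra). nra.
Qed.

Lemma rho_bounds : 0.92626 < rho < 0.92628.
Proof.
  unfold rho, Rdiv. rewrite Rinv_mult. pose proof inv_p_bounds. nra.
Qed.

Lemma success_count_near n : (5 <= n)%nat ->
  -2 <= INR (success_count (fq n)) - rho * INR (fq n) <= 2.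
Proof.
  intros Hn.
  pose proof (defect_identity_R n Hn) as Id.
  pose proof (oscillation_bound n) as [Hlo Hhi].
  apply IZR_le in Hlo, Hhi.
  pose proof (fq_error_bound n ltac:(lia)) as Be.
  pose proof (fq_error_bound (n - 1) ltac:(lia)) as Be'.
  unfold fq_error in Be, Be'. replace (n - 1 - 1)%nat with (n - 2)%nat in Be' by lia.
  pose proof inv_p_bounds as Br.
  set (r := / p) in *.
  assert (Hr : r * p = 1) by (unfold r; field; lra).
  set (x := INR (fq n)) in *. set (x1 := INR (fq (n - 1))) in *.
  set (x2 := INR (fq (n - 2))) in *.
  set (e := x - p * x1) in *. set (e' := x1 - p * x2) in *.
  assert (X1 : x1 = r * (x - e)).
  { unfold e. replace (x - (x - p * x1)) with (p * x1) by ring.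
    rewrite <- Rmult_assoc, Hr. ring. }
  assert (X2 : x2 = r * (x1 - e')).
  { unfold e'. replace (x1 - (x1 - p * x2)) with (p * x2) by ring.
    rewrite <- Rmult_assoc, Hr. ring. }
  assert (Hrho : rho = (1 + 5 * r + 3 * r * r) / 7).
  { unfold rho, r, Rdiv. rewrite Rinv_mult. ring. }
  assert (E7 : 7 * (INR (success_count (fq n)) - rho * x)
               = - 5 * r * e - 3 * r * r * e - 3 * r * e' - IZR (oscillation n)).
  { rewrite Hrho. replace (7 * ((1 + 5 * r + 3 * r * r) / 7 * x))
      with ((1 + 5 * r + 3 * r * r) * x) by field.
    rewrite X2, X1 in Id. lra. }
  nra.
Qed.

Lemma greedy_proportion_near n : (5 <= n)%nat ->
  Rabs (greedy_proportion n - rho) <= 3 / (INR (fq n) - 1).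
Proof.
  intros Hn. pose proof (success_count_near n Hn) as Hc.
  pose proof rho_bounds.
  assert (Hx : INR n <= INR (fq n)) by apply le_INR, fq_ge_id.
  assert (Hn5 : 5 <= INR n) by (replace 5 with (INR 5) by (simpl; lra); apply le_INR; lia).
  unfold greedy_proportion.
  rewrite q_fq, minus_INR by (apply fq_pos; lia). change (INR 1) with 1.
  rewrite <- (greedy_count_succ n), S_INR in Hc by lia.
  set (x := INR (fq n)) in *. set (c := INR (greedy_count n)) in *.
  replace (c / (x - 1) - rho) with ((c + 1 - rho * x - (1 - rho)) / (x - 1)) by (field; lra).
  unfold Rdiv. rewrite Rabs_mult, (Rabs_right (/ (x - 1)))
    by (apply Rle_ge, Rlt_le, Rinv_0_lt_compat; lra).
  apply Rmult_le_compat_r; [apply Rlt_le, Rinv_0_lt_compat; lra|].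
  apply Rabs_le. lra.
Qed.

Lemma greedy_proportion_cv : Un_cv greedy_proportion rho.
Proof.
  intros eps Heps.
  destruct (INR_archimed eps (3 + eps) Heps) as [N HN].
  exists (Nat.max N 5). intros n Hn. unfold R_dist.
  pose proof (greedy_proportion_near n ltac:(lia)).
  assert (INR N <= INR n) by (apply le_INR; lia).
  assert (INR n <= INR (fq n)) by apply le_INR, fq_ge_id.
  assert (5 <= INR n) by (replace 5 with (INR 5) by (simpl; lra); apply le_INR; lia).
  assert (3 / (INR (fq n) - 1) < eps).
  { assert ((INR (fq n) - 1) * / (INR (fq n) - 1) = 1) by (field; lra).
    assert (0 < / (INR (fq n) - 1)) by (apply Rinv_0_lt_compat; lra).
    unfold Rdiv. nra. }
  lra.
Qed.

End PlasticNumber.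

Theorem mainTheorem14 :
  exists rho : R,
    0 < rho < 1 /\ 0.92626 < rho < 0.92628 /\
    Un_cv greedy_proportion rho.
Proof.
  destruct plastic_number_exists as [p [Hp Hp3]].
  exists (rho p).
  assert (Hr : 0.92626 < rho p < 0.92628) by (apply rho_bounds; assumption).
  split; [lra|split; [exact Hr|]].
  apply greedy_proportion_cv; assumption.
Qed.
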